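(* Let $\mathbb{F}_q$ be a finite field, let $K,N,f,d$ be positive integers with $N \ge (K-1)d+3f+1$, and let $G_\mathcal{L}\in\mathbb{F}_q^{K\times N}$ be the Lagrange generator matrix defined in the context, with $i$-th column $(G_\mathcal{L})_i$. Let $\mathbf{B}=(b_{k,k'})_{k,k'\in[K]}$ and $\mathbf{B}'=(b'_{k,k'})_{k,k'\in[K]}$ be $K\times K$ arrays whose entries lie in $\mathbb{F}_q^{Q\times R}$. Suppose the $N$ nodes, indexed by $[N]$, are partitioned into correct nodes and at most $f$ Byzantine nodes, and suppose there exist sets $\mathcal{I},\mathcal{J}\subseteq[N]$ with $|\mathcal{I}|=|\mathcal{J}|=N-f$ such that for every correct node $i\in\mathcal{I}$ and every correct node $j\in\mathcal{J}$, $$w_{i,j}:=(G_\mathcal{L})_i^\intercal\,\mathbf{B}\,(G_\mathcal{L})_j \;=\; (G_\mathcal{L})_j^\intercal\,(\mathbf{B}')^\intercal\,(G_\mathcal{L})_i=:u_{j,i}.$$ (This is exactly what a valid $(N-f,N)$-threshold signature on the quorum identifier of $\mathcal{I}$ certifies in the protocol.) Then $\mathbf{B}=\mathbf{B}'$.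
   Context: Fix mutually disjoint sets of distinct elements $\{\alpha_1,\ldots,\alpha_N\}$ and $\{\omega_1,\ldots,\omega_K\}$ of $\mathbb{F}_q$. For $k\in[K]$ let $\Phi_k(z)=\prod_{j\in[K],j\ne k}\frac{z-\omega_j}{\omega_k-\omega_j}$, and let $G_\mathcal{L}$ be the $K\times N$ matrix with $(k,i)$ entry $\Phi_k(\alpha_i)$. For a $K\times K$ array $\mathbf{M}=(m_{k,k'})$ with entries in the $\mathbb{F}_q$-vector space $\mathbb{F}_q^{Q\times R}$ and column vectors $x,y\in\mathbb{F}_q^K$, $x^\intercal \mathbf{M} y$ denotes $\sum_{k,k'}x_k m_{k,k'}y_{k'}\in\mathbb{F}_q^{Q\times R}$, and $\mathbf{M}^\intercal$ denotes the $K\times K$ array whose $(k,k')$ entry is $m_{k',k}$ (entries themselves are not transposed). In the paper, $\mathbf{B}$ is the block from which node $i$'s coded outgoing strip $(G_\mathcal{L})_i^\intercal\mathbf{B}$ is formed and $\mathbf{B}'$ the block from which its coded incoming strip $(G_\mathcal{L})_i^\intercal(\mathbf{B}')^\intercal$ is formed; $d\ge 1$ is the degree of the verification polynomial. *)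

From HB Require Import structures.
From mathcomp Require Import all_boot all_order all_algebra all_field.
Set Implicit Arguments. Unset Strict Implicit. Unset Printing Implicit Defensive.
Import GRing.Theory.
Local Open Scope ring_scope.

Definition Phi (F : fieldType) (K : nat) (omega : 'I_K -> F) (k : 'I_K) (z : F) : F :=
  \prod_(j < K | j != k) ((z - omega j) / (omega k - omega j)).

Definition GL (F : fieldType) (K N : nat) (omega : 'I_K -> F) (alpha : 'I_N -> F)
  : 'M[F]_(K, N) := \matrix_(k < K, i < N) Phi omega k (alpha i).

(* x^T M y for a K x K array M with entries in F^{Q x R}:
   \sum_{k,k'} x_k m_{k,k'} y_{k'}. *)
Definition bilin (F : fieldType) (K Q R : nat) (x : 'cV[F]_K)
  (M : 'M['M[F]_(Q, R)]_K) (y : 'cV[F]_K) : 'M[F]_(Q, R) :=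
  \sum_(k < K) \sum_(k' < K) ((x k 0 * y k' 0) *: M k k').

(** The Lagrange basis polynomials [Phi_k] have degree [< K] and satisfy
    [Phi_k(omega_j) = (k == j)], so a combination [sum_k c_k Phi_k] vanishing at
    [K] distinct points is the zero polynomial and all [c_k] vanish.  Since
    [u_{j,i} = (G_L)_i^T B' (G_L)_j], the hypothesis says that the bilinear form
    of [B - B'] vanishes on the Lagrange columns of all pairs of honest nodes of
    [I] and [J]; each of these sets has at least [N - 2f >= K] elements, so
    applying the fact above in each argument in turn gives [B - B' = 0]. *)

From HB Require Import structures.
From mathcomp Require Import all_boot all_order all_algebra all_field.
From mathcomp Require Import zify.

Set Implicit Arguments.
Unset Strict Implicit.
Unset Printing Implicit Defensive.

Local Open Scope ring_scope.
Import GRing.Theory.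

Section LagrangeBasis.
Variables (F : fieldType) (K : nat) (omega : 'I_K -> F).
Hypothesis omega_inj : injective omega.

Definition lagrange_poly (k : 'I_K) : {poly F} :=
  \prod_(j < K | j != k) ((omega k - omega j)^-1 *: ('X - (omega j)%:P)).

Lemma horner_lagrange_poly k x : (lagrange_poly k).[x] = Phi omega k x.
Proof.
rewrite horner_prod; apply: eq_bigr => j _.
by rewrite hornerZ hornerXsubC mulrC.
Qed.

Lemma size_lagrange_poly k : (size (lagrange_poly k) <= K)%N.
Proof.
apply: leq_trans (size_poly_prod_leq _ _) _.
have size_factor j : j != k ->
    size ((omega k - omega j)^-1 *: ('X - (omega j)%:P)) = 2%N.
  move=> jk; rewrite size_scale ?size_XsubC // invr_eq0 subr_eq0.
  by rewrite (inj_eq omega_inj) eq_sym.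
rewrite (eq_bigr (fun=> 2%N)) // sum_nat_const cardC1 card_ord.
have := ltn_ord k; lia.
Qed.

Lemma Phi_omega k j : Phi omega k (omega j) = (k == j)%:R.
Proof.
rewrite /Phi; have [<-|kj] := eqVneq k j.
  apply: big1 => i ik; rewrite divff // subr_eq0.
  by rewrite (inj_eq omega_inj) eq_sym.
by rewrite (bigD1 j) 1?eq_sym //= subrr mul0r mul0r.
Qed.

Lemma lagrange_comb_eq0 (c : 'I_K -> F) (s : seq F) :
    uniq s -> (K <= size s)%N ->
    {in s, forall x, \sum_(k < K) c k * Phi omega k x = 0} ->
  forall k, c k = 0.
Proof.
move=> us Ks c_s.
pose p := \sum_(k < K) c k *: lagrange_poly k.
have p_horner x : p.[x] = \sum_(k < K) c k * Phi omega k x.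
  rewrite horner_sum; apply: eq_bigr => k _.
  by rewrite hornerZ horner_lagrange_poly.
have size_p : (size p <= K)%N.
  apply: leq_trans (size_sum _ _ _) _; apply/bigmax_leqP => k _.
  exact: leq_trans (size_scale_leq _ _) (size_lagrange_poly k).
have p0 : p = 0.
  apply: (roots_geq_poly_eq0 _ us); last exact: leq_trans size_p Ks.
  by apply/allP => x xs; rewrite /root p_horner c_s.
move=> k; have := p_horner (omega k); rewrite p0 horner0.
under eq_bigr do rewrite Phi_omega mulr_natr mulrb.
by rewrite -big_mkcond big_pred1_eq.
Qed.

End LagrangeBasis.

Section Bilinear.
Variables (F : fieldType) (K Q R : nat).
Implicit Types (u v : 'cV[F]_K) (M N : 'M['M[F]_(Q, R)]_K).

Lemma bilin_mxE u M v q r :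
  bilin u M v q r = \sum_(k < K) \sum_(k' < K) u k 0 * v k' 0 * M k k' q r.
Proof.
rewrite /bilin summxE; apply: eq_bigr => k _.
by rewrite summxE; apply: eq_bigr => k' _; rewrite mxE.
Qed.

Lemma bilin_trmx u M v : bilin v M^T u = bilin u M v.
Proof.
rewrite /bilin exchange_big /=; apply: eq_bigr => k _; apply: eq_bigr => k' _.
by rewrite mxE mulrC.
Qed.

Lemma bilinB u M N v : bilin u (M - N) v = bilin u M v - bilin u N v.
Proof.
rewrite /bilin -sumrB; apply: eq_bigr => k _; rewrite -sumrB.
by apply: eq_bigr => k' _; rewrite !mxE scalerBr.
Qed.

Variable omega : 'I_K -> F.
Hypothesis omega_inj : injective omega.

Definition lagrange_col (x : F) : 'cV[F]_K := \col_k Phi omega k x.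

Lemma lagrange_bilin_eq0 M (s t : seq F) :
    uniq s -> uniq t -> (K <= size s)%N -> (K <= size t)%N ->
    {in s & t, forall x y, bilin (lagrange_col x) M (lagrange_col y) = 0} ->
  M = 0.
Proof.
move=> us ut Ks Kt M_st.
apply/matrixP => a b; apply/matrixP => q r; rewrite !mxE.
have row_eq0 y : y \in t -> forall a,
    \sum_(b < K) M a b q r * Phi omega b y = 0.
  move=> yt; pose c a := \sum_(b < K) M a b q r * Phi omega b y.
  apply: (lagrange_comb_eq0 omega_inj (c := c) us Ks) => x xs.
  have := congr1 (fun P : 'M_(Q, R) => P q r) (M_st x y xs yt).
  rewrite bilin_mxE mxE => st_eq0; rewrite -[RHS]st_eq0.
  apply: eq_bigr => a' _; rewrite mulr_suml.
  by apply: eq_bigr => b' _; rewrite !mxE mulrC [_ * Phi _ _ _]mulrC mulrA.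
apply: (lagrange_comb_eq0 omega_inj (c := M a ^~ q ^~ r) ut Kt) => y yt.
exact: row_eq0.
Qed.

Lemma col_GL n (alpha : 'I_n -> F) i :
  col i (GL omega alpha) = lagrange_col (alpha i).
Proof. by apply/matrixP => k l; rewrite !mxE. Qed.

End Bilinear.

Theorem lemma1 (F : finFieldType) (K N f d Q R : nat)
  (alpha : 'I_N -> F) (omega : 'I_K -> F)
  (alpha_inj : injective alpha) (omega_inj : injective omega)
  (disj : forall (i : 'I_N) (k : 'I_K), alpha i != omega k)
  (hK : (0 < K)%N) (hN : (0 < N)%N) (hf : (0 < f)%N) (hd : (0 < d)%N)
  (hNbound : ((K - 1) * d + 3 * f + 1 <= N)%N)
  (B B' : 'M['M[F]_(Q, R)]_K)
  (Byz : {set 'I_N}) (hByz : (#|Byz| <= f)%N)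
  (I J : {set 'I_N}) (hI : #|I| = (N - f)%N) (hJ : #|J| = (N - f)%N)
  (hw : forall i j : 'I_N, i \in I -> i \notin Byz -> j \in J -> j \notin Byz ->
      bilin (col i (GL omega alpha)) B (col j (GL omega alpha))
      = bilin (col j (GL omega alpha)) B'^T (col i (GL omega alpha))) :
  B = B'.
Proof.
pose honest_pts (A : {set 'I_N}) := [seq alpha i | i <- enum (A :\: Byz)].
have uniq_honest A : uniq (honest_pts A) by rewrite map_inj_uniq ?enum_uniq.
have size_honest (A : {set 'I_N}) :
    #|A| = (N - f)%N -> (K <= size (honest_pts A))%N.
  move=> cardA; suff : (K <= #|A :\: Byz|)%N by rewrite size_map -cardE.
  have byz_in_A : (#|A :&: Byz| <= f)%N.
    exact: leq_trans (subset_leq_card (subsetIr A Byz)) hByz.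
  rewrite cardsD cardA; have := leq_pmulr (K - 1) hd; lia.
apply/eqP; rewrite -subr_eq0; apply/eqP.
apply: (lagrange_bilin_eq0 omega_inj (uniq_honest I) (uniq_honest J)
          (size_honest I hI) (size_honest J hJ)).
move=> _ _ /mapP[i iI ->] /mapP[j jJ ->].
move: iI jJ; rewrite !mem_enum !inE => /andP[iB iI] /andP[jB jJ].
by rewrite bilinB -!col_GL hw // bilin_trmx subrr.
Qed.
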